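(* Let $n\ge3$ and let $D$ be an affine $n$-diagram. If $D$ lies in $O_n$, then for every integer $i$ the number of intersections of $D$ with the line $x=i+\tfrac12$ is even; if $D$ does not lie in $O_n$, then for every integer $i$ this number is odd.
   Context: An affine $n$-diagram consists of the nodes $\mathbb{Z}\times\{0,1\}\subset\mathbb{R}^2$ together with curves called edges such that: every node is an endpoint of exactly one edge; edges lie in $\mathbb{R}\times[0,1]$; an edge not joining two nodes is an infinite horizontal line meeting no node, and there are finitely many such; no two edges intersect; the diagram is invariant under horizontal translation by $n$. Diagrams are taken up to isotopy. The number of intersections of a diagram $D$ with the line $x=i+\tfrac12$ means the minimal number of intersection points over all diagrams isotopic to $D$. For a commutative ring $R$ with an invertible element $v$, $D_n$ is the $R$-algebra with basis the affine $n$-diagrams (product: stack, remove $x$ closed loops, multiply by $(v+v^{-1})^x$), and $O_n$ is the $R$-span of the diagrams for which the number of intersections with $x=i+\tfrac12$ is even for every integer $i$; a diagram ''lies in $O_n$'' if it is one of these. *)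

From Stdlib Require Import ZArith List Bool Arith.
Import ListNotations.
Open Scope Z_scope.

(* A node (x, s) of Z x {0,1}: s = false means height 0 (bottom),
   s = true means height 1 (top). *)
Definition node := (Z * bool)%type.

(* Linear order on nodes obtained by reading the boundary of the strip
   R x [0,1] (a topological disk whose boundary is a circle through +-oo):
   bottom row from left to right, then top row from right to left.
   Chords in a disk are disjoint iff their endpoints do not interleave. *)
Definition blt (p q : node) : Prop :=
  match p, q with
  | (x, false), (y, false) => x < y
  | (_, false), (_, true) => True
  | (_, true), (_, false) => False
  | (x, true), (y, true) => y < x
  end.

(* An affine n-diagram up to isotopy: an n-periodic non-crossing perfect
   matching of the nodes (the edges joining nodes; in the simply connected
   strip the isotopy class of such an edge is determined by its endpoints),
   together with the number of infinite horizontal lines.  A horizontal line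
   separates the bottom nodes from the top nodes, so lines can only occur if
   no edge joins a bottom node to a top node; all lines are then isotopic
   to one another, so only their number matters. *)
Record affine_diagram (n : Z) := {
  mt : node -> node;
  nlines : nat;
  mt_invol : forall p, mt (mt p) = p;
  mt_nofix : forall p, mt p <> p;
  mt_periodic : forall x s,
    mt (x + n, s) = (fst (mt (x, s)) + n, snd (mt (x, s)));
  mt_noncross : forall p q,
    blt p (mt p) -> blt q (mt q) ->
    ~ (blt p q /\ blt q (mt p) /\ blt (mt p) (mt q));
  lines_no_through : (0 < nlines)%nat -> forall p, snd (mt p) = snd p
}.

Arguments mt {n} _ _.
Arguments nlines {n} _.

(* The maximal horizontal span |x(mt p) - x(p)| of an edge; by periodicity it
   suffices to look at the nodes with 0 <= x < n. *)
Definition span {n : Z} (D : affine_diagram n) : Z :=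
  fold_right Z.max 0
    (flat_map (fun j : nat =>
       [Z.abs (fst (mt D (Z.of_nat j, false)) - Z.of_nat j);
        Z.abs (fst (mt D (Z.of_nat j, true)) - Z.of_nat j)])
      (seq 0 (Z.to_nat n))).

Definition crosses_at {n : Z} (D : affine_diagram n) (i : Z) (p : node) : bool :=
  (fst p <=? i) && (i <? fst (mt D p)).

(* Minimal number of intersections of D with the line x = i + 1/2:
   every horizontal line meets it once, and an edge (drawn minimally) meets
   it once iff its endpoints lie on different sides, otherwise not at all.
   Each crossing edge is counted via its left endpoint p (x(p) <= i), which
   necessarily satisfies x(p) >= i - span D, so the finite window below
   captures all crossing edges. *)
Definition num_intersections {n : Z} (D : affine_diagram n) (i : Z) : nat :=
  Nat.add (nlines D)
   (length (filter (crosses_at D i)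
     (flat_map (fun k : nat => [(i - Z.of_nat k, false); (i - Z.of_nat k, true)])
        (seq 0 (S (Z.to_nat (span D))))))).

(* D lies in O_n: it is one of the spanning diagrams of O_n, i.e. the number
   of intersections with every line x = i + 1/2 is even. *)
Definition lies_in_O {n : Z} (D : affine_diagram n) : Prop :=
  forall i : Z, Nat.even (num_intersections D i) = true.

From Stdlib Require Import ZArith List Bool Lia.
Import ListNotations.
Open Scope Z_scope.

(* The parity of the number of intersections with x = i + 1/2 does not depend
   on i.  Passing from i to i + 1 only affects the two edges with an endpoint
   in column i + 1.  If these two nodes are joined to each other, nothing
   changes.  Otherwise each of the two edges either stops crossing (its other
   end is to the left) or starts crossing (its other end is to the right), so
   the count changes by -2, 0 or 2. *)

Definition count {A : Type} (f : A -> bool) (l : list A) : nat :=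
  length (filter f l).

Lemma count_cons {A : Type} (f : A -> bool) a l :
  count f (a :: l) = (Nat.b2n (f a) + count f l)%nat.
Proof. unfold count; simpl; destruct (f a); reflexivity. Qed.

Lemma count_app {A : Type} (f : A -> bool) l1 l2 :
  count f (l1 ++ l2) = (count f l1 + count f l2)%nat.
Proof. unfold count. rewrite filter_app, length_app. reflexivity. Qed.

Lemma count_add {A : Type} (f g h : A -> bool) l :
  (forall p, In p l -> Nat.b2n (f p) = (Nat.b2n (g p) + Nat.b2n (h p))%nat) ->
  count f l = (count g l + count h l)%nat.
Proof.
  induction l as [|a l IH]; intros H; [reflexivity|].
  rewrite !count_cons, IH by (intros; apply H; right; assumption).
  specialize (H a (or_introl eq_refl)). lia.
Qed.

Lemma count_false {A : Type} (f : A -> bool) l :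
  (forall p, In p l -> f p = false) -> count f l = 0%nat.
Proof.
  induction l as [|a l IH]; intros H; [reflexivity|].
  rewrite count_cons, IH by (intros; apply H; right; assumption).
  rewrite (H a (or_introl eq_refl)). reflexivity.
Qed.

Lemma fold_max_ge l a : In a l -> a <= fold_right Z.max 0 l.
Proof.
  induction l as [|b l IH]; simpl; [tauto|].
  intros [<-|H]; [lia|]. apply IH in H. lia.
Qed.

Lemma fold_max_nonneg l : 0 <= fold_right Z.max 0 l.
Proof. induction l; simpl; lia. Qed.

Definition node_eqb (p q : node) : bool :=
  (fst p =? fst q) && Bool.eqb (snd p) (snd q).

Lemma node_eqb_spec p q : reflect (p = q) (node_eqb p q).
Proof.
  destruct p as [x s], q as [y t]; unfold node_eqb; simpl.
  destruct (Z.eqb_spec x y), s, t; simpl; constructor; congruence.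
Qed.

Fixpoint columns (i : Z) (m : nat) : list node :=
  match m with
  | O => []
  | S m' => (i, false) :: (i, true) :: columns (i - 1) m'
  end.

Lemma flat_map_seq_columns i k m :
  flat_map (fun k : nat => [(i - Z.of_nat k, false); (i - Z.of_nat k, true)]) (seq k m)
  = columns (i - Z.of_nat k) m.
Proof.
  revert k; induction m as [|m IH]; intros k; simpl; [reflexivity|].
  rewrite IH. replace (i - Z.of_nat (S k)) with (i - Z.of_nat k - 1) by lia.
  reflexivity.
Qed.

Lemma in_columns i m p : In p (columns i m) -> i - Z.of_nat m < fst p <= i.
Proof.
  revert i; induction m as [|m IH]; intros i H; simpl in H; [contradiction|].
  destruct H as [<-|[<-|H]]; simpl; [lia|lia|].
  apply IH in H. lia.
Qed.

Lemma columns_succ_r i m :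
  columns i (S m) = columns i m ++ [(i - Z.of_nat m, false); (i - Z.of_nat m, true)].
Proof.
  revert i; induction m as [|m IH]; intros i.
  - simpl. rewrite Z.sub_0_r. reflexivity.
  - change (columns i (S (S m))) with ((i, false) :: (i, true) :: columns (i - 1) (S m)).
    rewrite IH. simpl.
    replace (i - 1 - Z.of_nat m) with (i - Z.of_nat (S m)) by lia. reflexivity.
Qed.

Lemma count_node_eqb_columns i m q :
  count (fun p => node_eqb p q) (columns i m) =
  Nat.b2n ((i - Z.of_nat m <? fst q) && (fst q <=? i)).
Proof.
  revert i; induction m as [|m IH]; intros i.
  - simpl. destruct (Z.ltb_spec (i - 0) (fst q)), (Z.leb_spec (fst q) i);
      simpl; reflexivity || lia.
  - simpl columns. rewrite !count_cons, IH.
    destruct q as [x s]; unfold node_eqb; simpl fst; simpl snd.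
    destruct (Z.eqb_spec i x), (Z.ltb_spec (i - 1 - Z.of_nat m) x),
      (Z.leb_spec x (i - 1)), (Z.ltb_spec (i - Z.of_nat (S m)) x),
      (Z.leb_spec x i), s; simpl; lia.
Qed.

Section Diagram.

Variable n : Z.
Variable D : affine_diagram n.

Lemma crosses_at_succ i p :
  fst p <= i ->
  Nat.b2n (crosses_at D i p) =
  (Nat.b2n (crosses_at D (i + 1) p) + Nat.b2n (fst (mt D p) =? i + 1)%Z)%nat.
Proof.
  intros Hp; unfold crosses_at.
  destruct (Z.leb_spec (fst p) i), (Z.ltb_spec i (fst (mt D p))),
    (Z.leb_spec (fst p) (i + 1)), (Z.ltb_spec (i + 1) (fst (mt D p))),
    (Z.eqb_spec (fst (mt D p)) (i + 1)); simpl; lia.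
Qed.

Lemma mt_eq_iff p q : mt D p = q <-> p = mt D q.
Proof. split; [intros <-|intros ->]; rewrite mt_invol; reflexivity. Qed.

Lemma mt_shift x s k :
  fst (mt D (x + k * n, s)) = fst (mt D (x, s)) + k * n.
Proof.
  revert x; induction k as [|k IH|k IH] using Z.peano_ind; intros x.
  - rewrite !Z.mul_0_l, !Z.add_0_r. reflexivity.
  - replace (x + Z.succ k * n) with (x + k * n + n) by lia.
    rewrite mt_periodic. simpl. rewrite IH. lia.
  - pose proof (mt_periodic _ D (x + Z.pred k * n) s) as H.
    replace (x + Z.pred k * n + n) with (x + k * n) in H by lia.
    apply (f_equal fst) in H. simpl in H. rewrite IH in H. lia.
Qed.

Lemma mt_column_top_bottom x :
  fst (mt D (x, false)) = x <-> fst (mt D (x, true)) = x.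
Proof.
  assert (K : forall s, fst (mt D (x, s)) = x -> fst (mt D (x, negb s)) = x).
  { intros s Hs. destruct (mt D (x, s)) as [y t] eqn:E; simpl in Hs; subst y.
    destruct (Bool.bool_dec t s) as [->|Ht].
    - exfalso. apply (mt_nofix _ D (x, s)). exact E.
    - apply mt_eq_iff in E. replace (negb s) with t by (destruct s, t; simpl; congruence).
      rewrite <- E. reflexivity. }
  split; [apply (K false)|apply (K true)].
Qed.

Lemma ends_in_column x p :
  Nat.b2n (fst (mt D p) =? x) =
  (Nat.b2n (node_eqb p (mt D (x, false))) + Nat.b2n (node_eqb p (mt D (x, true))))%nat.
Proof.
  destruct (node_eqb_spec p (mt D (x, false))) as [E0|E0],
    (node_eqb_spec p (mt D (x, true))) as [E1|E1].
  - rewrite E1 in E0. apply (f_equal (mt D)) in E0. rewrite !mt_invol in E0. discriminate.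
  - apply mt_eq_iff in E0. rewrite E0, Z.eqb_refl. reflexivity.
  - apply mt_eq_iff in E1. rewrite E1, Z.eqb_refl. reflexivity.
  - destruct (Z.eqb_spec (fst (mt D p)) x) as [Ex|]; [exfalso|reflexivity].
    destruct (mt D p) as [y []] eqn:E; simpl in Ex; subst y; apply mt_eq_iff in E;
      [apply E1|apply E0]; exact E.
Qed.

Lemma span_nonneg : 0 <= span D.
Proof. apply fold_max_nonneg. Qed.

Lemma num_intersections_columns i :
  num_intersections D i =
  (nlines D + count (crosses_at D i) (columns i (S (Z.to_nat (span D)))))%nat.
Proof.
  unfold num_intersections, count.
  rewrite flat_map_seq_columns, Z.sub_0_r. reflexivity.
Qed.

Hypothesis n_pos : 0 < n.

Lemma edge_length_le_span p : Z.abs (fst (mt D p) - fst p) <= span D.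
Proof.
  destruct p as [x s].
  pose proof (Z.div_mod x n ltac:(lia)) as Hx.
  pose proof (Z.mod_pos_bound x n n_pos) as Hb.
  assert (E : fst (mt D (x, s)) - x = fst (mt D (x mod n, s)) - x mod n).
  { rewrite Hx at 1. rewrite Z.add_comm, Z.mul_comm, mt_shift. lia. }
  simpl fst. rewrite E.
  unfold span. apply fold_max_ge. apply in_flat_map.
  exists (Z.to_nat (x mod n)). split.
  - apply in_seq. lia.
  - rewrite Z2Nat.id by lia. destruct s; simpl; auto.
Qed.

Lemma count_crosses_at_far_column i m :
  span D <= Z.of_nat m ->
  count (crosses_at D i) (columns i (S m)) = count (crosses_at D i) (columns i m).
Proof.
  intros Hm.
  rewrite columns_succ_r, count_app, (count_false _ [_; _]); [apply Nat.add_0_r|].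
  intros p Hp. pose proof (edge_length_le_span p). unfold crosses_at.
  destruct (Z.ltb_spec i (fst (mt D p))); [|apply andb_false_r].
  destruct Hp as [<-|[<-|[]]]; simpl in *; lia.
Qed.

Lemma count_crosses_at_succ i m :
  count (crosses_at D i) (columns i m) =
  (count (crosses_at D (i + 1)) (columns i m)
   + Nat.b2n ((i - Z.of_nat m <? fst (mt D (i + 1, false)%Z))
              && (fst (mt D (i + 1, false)%Z) <=? i))%Z
   + Nat.b2n ((i - Z.of_nat m <? fst (mt D (i + 1, true)%Z))
              && (fst (mt D (i + 1, true)%Z) <=? i))%Z)%nat.
Proof.
  rewrite <- !count_node_eqb_columns.
  rewrite (count_add (crosses_at D i) (crosses_at D (i + 1)) (fun p => fst (mt D p) =? i + 1)).
  - rewrite (count_add (fun p => fst (mt D p) =? i + 1)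
               (fun p => node_eqb p (mt D (i + 1, false)))
               (fun p => node_eqb p (mt D (i + 1, true)))); [lia|].
    intros p _. apply ends_in_column.
  - intros p Hp. apply crosses_at_succ. apply in_columns in Hp. lia.
Qed.

Lemma column_edge_sides i m s :
  span D <= Z.of_nat m ->
  (Nat.b2n ((i - Z.of_nat m <? fst (mt D (i + 1, s)%Z)) && (fst (mt D (i + 1, s)%Z) <=? i))%Z
   + Nat.b2n (crosses_at D (i + 1) (i + 1, s)%Z))%nat
  = Nat.b2n (negb (fst (mt D (i + 1, s)) =? i + 1)).
Proof.
  intros Hm. pose proof (edge_length_le_span (i + 1, s)) as B.
  unfold crosses_at. simpl fst in *. rewrite Z.leb_refl.
  destruct (Z.ltb_spec (i - Z.of_nat m) (fst (mt D (i + 1, s)))),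
    (Z.leb_spec (fst (mt D (i + 1, s))) i), (Z.ltb_spec (i + 1) (fst (mt D (i + 1, s)))),
    (Z.eqb_spec (fst (mt D (i + 1, s))) (i + 1)); simpl; lia.
Qed.

Lemma num_intersections_succ_add_even i :
  Nat.even (num_intersections D i + num_intersections D (i + 1)) = true.
Proof.
  rewrite !num_intersections_columns.
  set (m := Z.to_nat (span D)).
  assert (Hm : span D <= Z.of_nat m) by (pose proof span_nonneg; unfold m; lia).
  assert (columns_succ_l : columns (i + 1) (S m) = (i + 1, false) :: (i + 1, true) :: columns i m).
  { simpl. replace (i + 1 - 1) with i by lia. reflexivity. }
  assert (same_column_iff : (fst (mt D (i + 1, true)) =? i + 1) = (fst (mt D (i + 1, false)) =? i + 1)).
  { apply eq_true_iff_eq. rewrite !Z.eqb_eq. symmetry. apply mt_column_top_bottom. }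
  pose proof (column_edge_sides i m false Hm) as side_bottom.
  pose proof (column_edge_sides i m true Hm) as side_top. rewrite same_column_iff in side_top.
  rewrite count_crosses_at_far_column, columns_succ_l, !count_cons, count_crosses_at_succ by exact Hm.
  match goal with
  |- Nat.even ?a = true =>
      replace a with (2 * (nlines D + count (crosses_at D (i + 1)) (columns i m)
                           + Nat.b2n (negb (fst (mt D (i + 1, false)%Z) =? i + 1))%Z))%nat by lia
  end.
  rewrite Nat.even_mul. reflexivity.
Qed.

Lemma num_intersections_even_succ i :
  Nat.even (num_intersections D (i + 1)) = Nat.even (num_intersections D i).
Proof.
  pose proof (num_intersections_succ_add_even i) as H.
  rewrite Nat.even_add in H. symmetry. apply eqb_prop. exact H.
Qed.

Lemma num_intersections_even_const i :
  Nat.even (num_intersections D i) = Nat.even (num_intersections D 0).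
Proof.
  induction i as [|i IH|i IH] using Z.peano_ind; [reflexivity| |].
  - rewrite <- Z.add_1_r, num_intersections_even_succ. exact IH.
  - rewrite <- IH, <- (num_intersections_even_succ (Z.pred i)). f_equal. f_equal. lia.
Qed.

End Diagram.

Theorem proposition2p3p4 (n : Z) (hn : (3 <= n)%Z) (D : affine_diagram n) :
  (lies_in_O D -> forall i : Z, Nat.even (num_intersections D i) = true) /\
  (~ lies_in_O D -> forall i : Z, Nat.odd (num_intersections D i) = true).
Proof.
  assert (n_pos : 0 < n) by lia.
  split; [intros HO i; apply HO|].
  intros HnotO i. rewrite <- Nat.negb_even. apply negb_true_iff.
  destruct (Nat.even (num_intersections D i)) eqn:E; [exfalso|reflexivity].
  apply HnotO. intros j.
  rewrite (num_intersections_even_const n D n_pos j),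
    <- (num_intersections_even_const n D n_pos i).
  exact E.
Qed.
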